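(* Let $1\le r\le n$, let $g$ be a real-valued function differentiable on an open neighbourhood of $\mathrm{St}(r,n,\mathbb{C})$ in $\mathbb{C}^{n\times r}$, and let $\tilde g(Z)=g(\sigma(Z))$, where $\sigma$ keeps the first $r$ columns. Let $U_*\in\mathcal{U}_n$ and $X_*=\sigma(U_* )\in\mathrm{St}(r,n,\mathbb{C})$. Then $\operatorname{grad}\tilde g(U_* )=0$ if and only if $\operatorname{grad}g(X_* )=0$.
   Context: $\mathrm{St}(r,n,\mathbb{C})=\{X\in\mathbb{C}^{n\times r}:X^HX=I_r\}$ and $\mathcal{U}_n=\mathrm{St}(n,n,\mathbb{C})$. $\mathbb{C}^{n\times r}$ is a real Euclidean space with inner product $\mathrm{Re}\,\mathrm{tr}(X^HY)$; the Euclidean gradient of a real function $F$ is $\nabla F(X)=\frac{\partial F}{\partial X^{\Re}}+\mathrm{i}\frac{\partial F}{\partial X^{\Im}}$. With $\mathrm{skew}(P)=\frac12(P-P^H)$, the Riemannian gradient on the Stiefel manifold is $\operatorname{grad}g(X)=(I_n-XX^H)\nabla g(X)+X\,\mathrm{skew}(X^H\nabla g(X))$, and on $\mathcal{U}_n$ it is $\operatorname{grad}\tilde g(U)=U\,\mathrm{skew}(U^H\nabla\tilde g(U))$. *)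

From mathcomp Require Import all_boot all_order all_algebra.
From mathcomp Require Import boolp reals.
From mathcomp.real_closed Require Import complex.
Set Implicit Arguments. Unset Strict Implicit. Unset Printing Implicit Defensive.
Import Order.TTheory GRing.Theory Num.Theory.
Local Open Scope ring_scope.

Section Defs.
Variable R : realType.
Local Notation C := (R[i]).

Definition mxH (m p : nat) (A : 'M[C]_(m, p)) : 'M[C]_(p, m) :=
  (map_mx (@conjc R) A)^T.

Definition rinner (m p : nat) (A B : 'M[C]_(m, p)) : R :=
  complex.Re (\tr (mxH A *m B)).

Definition nrm2 (m p : nat) (A : 'M[C]_(m, p)) : R := rinner A A.

Definition skewH (p : nat) (P : 'M[C]_p) : 'M[C]_p :=
  (2%:R)^-1 *: (P - mxH P).

Definition stiefel (m p : nat) (X : 'M[C]_(m, p)) : Prop :=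
  mxH X *m X = 1%:M.

(* G is the Euclidean gradient of F : C^{m x p} -> R at X (Frechet sense,
   w.r.t. the real inner product Re tr(G^H H) and the Frobenius norm):
   |F(X+H) - F(X) - <G,H>| = o(||H||), written with squared quantities. *)
Definition is_egrad (m p : nat) (F : 'M[C]_(m, p) -> R) (X G : 'M[C]_(m, p))
  : Prop :=
  forall eps : R, 0 < eps -> exists2 d : R, 0 < d &
    forall H : 'M[C]_(m, p), nrm2 H < d ->
      (F (X + H) - F X - rinner G H) ^+ 2 <= eps * nrm2 H.

Definition differentiable_at (m p : nat) (F : 'M[C]_(m, p) -> R) X : Prop :=
  exists G, is_egrad F X G.

(* the Euclidean gradient nabla F(X) (0 if F is not differentiable at X) *)
Definition egrad (m p : nat) (F : 'M[C]_(m, p) -> R) (X : 'M[C]_(m, p))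
  : 'M[C]_(m, p) :=
  match pselect (exists G, is_egrad F X G) with
  | left h => projT1 (cid h)
  | right _ => 0
  end.

Definition mx_open (m p : nat) (O : 'M[C]_(m, p) -> Prop) : Prop :=
  forall X, O X -> exists2 d : R, 0 < d &
    forall Y, nrm2 (Y - X) < d -> O Y.

Definition rgrad_stiefel (m p : nat) (F : 'M[C]_(m, p) -> R) (X : 'M[C]_(m, p))
  : 'M[C]_(m, p) :=
  (1%:M - X *m mxH X) *m egrad F X + X *m skewH (mxH X *m egrad F X).

Definition rgrad_unitary (m : nat) (F : 'M[C]_m -> R) (U : 'M[C]_m)
  : 'M[C]_m :=
  U *m skewH (mxH U *m egrad F U).

Definition sigma (n r : nat) (hrn : (r <= n)%N) (Z : 'M[C]_n) : 'M[C]_(n, r) :=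
  \matrix_(i < n, j < r) Z i (widen_ord hrn j).

End Defs.

(* The map sigma is right multiplication by the isometry S = [I_r; 0], so the
   chain rule gives nabla g~(U) = nabla g(U S) S^H, and the skew part of
   U^H nabla g~(U) vanishes iff A S^H is Hermitian, where A = U^H nabla g(X).
   For an isometry S this holds iff A = S S^H A and S^H A is Hermitian, and,
   since U is unitary and X = U S, these are exactly the normal and tangential
   conditions (I - X X^H) nabla g(X) = 0 and skew(X^H nabla g(X)) = 0. *)
From mathcomp Require Import all_boot all_order all_algebra.
From mathcomp Require Import boolp reals.
From mathcomp.real_closed Require Import complex.
From mathcomp Require Import lra.
Import Order.TTheory GRing.Theory Num.Theory.
Local Open Scope ring_scope.
Set Implicit Arguments. Unset Strict Implicit.

Section ConjugateTranspose.
Variable R : realType.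
Local Notation C := (R[i]).

Lemma mxH_mul m p q (A : 'M[C]_(m, p)) (B : 'M[C]_(p, q)) :
  mxH (A *m B) = mxH B *m mxH A.
Proof. by rewrite /mxH map_mxM trmx_mul. Qed.

Lemma mxHK m p (A : 'M[C]_(m, p)) : mxH (mxH A) = A.
Proof. by apply/matrixP=> i j; rewrite /mxH !mxE conjcK. Qed.

Lemma mxHB m p (A B : 'M[C]_(m, p)) : mxH (A - B) = mxH A - mxH B.
Proof. by rewrite /mxH map_mxB linearB. Qed.

Lemma mxH1 m : mxH (1%:M : 'M[C]_m) = 1%:M.
Proof. by rewrite /mxH map_mx1 trmx1. Qed.

Lemma mxHZ m p (c : C) (A : 'M[C]_(m, p)) : mxH (c *: A) = conjc c *: mxH A.
Proof. by apply/matrixP=> i j; rewrite /mxH !mxE rmorphM. Qed.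

Lemma mxH_pid m p k : mxH (pid_mx k : 'M[C]_(m, p)) = pid_mx k.
Proof. by rewrite /mxH map_pid_mx tr_pid_mx. Qed.

Lemma skewH_eq0 p (M : 'M[C]_p) : skewH M = 0 <-> mxH M = M.
Proof.
rewrite /skewH; split=> [|->]; last by rewrite subrr scaler0.
by move/eqP; rewrite scalemx_eq0 invr_eq0 pnatr_eq0 subr_eq0 => /eqP.
Qed.

Lemma stiefel_mul m p q (U : 'M[C]_(m, p)) (S : 'M[C]_(p, q)) :
  stiefel U -> stiefel S -> stiefel (U *m S).
Proof.
by rewrite /stiefel mxH_mul => hU hS; rewrite mulmxA -(mulmxA _ _ U) hU mulmx1.
Qed.

Lemma stiefel_mulKmx m p q (U : 'M[C]_(m, p)) (A : 'M[C]_(p, q)) :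
  stiefel U -> U *m A = 0 <-> A = 0.
Proof.
move=> hU; split=> [hA|->]; last by rewrite mulmx0.
by rewrite -[A]mul1mx -hU -mulmxA hA mulmx0.
Qed.

Lemma pid_mx_stiefel m p : (p <= m)%N -> stiefel (pid_mx p : 'M[C]_(m, p)).
Proof. by move=> le_pm; rewrite /stiefel mxH_pid pid_mx_id // pid_mx_1. Qed.

Lemma sigma_pid n r (hrn : (r <= n)%N) (Z : 'M[C]_n) :
  sigma hrn Z = Z *m pid_mx r.
Proof.
apply/matrixP=> i j; rewrite !mxE (bigD1 (widen_ord hrn j)) //= big1.
  by rewrite mxE eqxx /= ltn_ord mulr1 addr0.
by move=> k; rewrite -(inj_eq val_inj) mxE /= => /negbTE ->; rewrite mulr0.
Qed.

End ConjugateTranspose.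

Section FrobeniusInnerProduct.
Variable R : realType.
Local Notation C := (R[i]).
Variables m p : nat.
Implicit Types A B K : 'M[C]_(m, p).

Lemma ReD (a b : C) : complex.Re (a + b) = complex.Re a + complex.Re b.
Proof. by case: a; case: b. Qed.

Lemma ReB (a b : C) : complex.Re (a - b) = complex.Re a - complex.Re b.
Proof. by case: a; case: b. Qed.

Lemma Re_realM (t : R) (z : C) : complex.Re (t%:C * z)%C = t * complex.Re z.
Proof. by case: z => a b /=; rewrite mul0r subr0. Qed.

Lemma Re_sum I (s : seq I) (P : pred I) (F : I -> C) :
  complex.Re (\sum_(i <- s | P i) F i) = \sum_(i <- s | P i) complex.Re (F i).
Proof. by elim/big_rec2: _ => // i y1 y2 _ <-; rewrite ReD. Qed.

Lemma Re_conjM_ge0 (a : C) : 0 <= complex.Re (conjc a * a).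
Proof. by case: a => a b /=; nra. Qed.

Lemma Re_conjM_eq0 (a : C) : complex.Re (conjc a * a) = 0 -> a = 0.
Proof.
case: a => a b /= h.
have -> : a = 0 by nra.
by have -> : b = 0 by nra.
Qed.

Lemma nrm2E A : nrm2 A = \sum_j \sum_i complex.Re (conjc (A i j) * A i j).
Proof.
rewrite /nrm2 /rinner /mxtrace Re_sum; apply: eq_bigr => j _.
by rewrite mxE Re_sum; apply: eq_bigr => i _; rewrite /mxH !mxE.
Qed.

Lemma nrm2_ge0 A : 0 <= nrm2 A.
Proof. by rewrite nrm2E; do 2![apply: sumr_ge0 => ? _]; exact: Re_conjM_ge0. Qed.

Lemma nrm2_eq0 A : nrm2 A = 0 -> A = 0.
Proof.
have ge0 j : 0 <= \sum_i complex.Re (conjc (A i j) * A i j).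
  by apply: sumr_ge0 => i _; exact: Re_conjM_ge0.
rewrite nrm2E => /eqP; rewrite psumr_eq0 // => /allP eq0.
apply/matrixP=> i j; rewrite mxE.
move: (eq0 j (mem_index_enum j)); rewrite /= psumr_eq0 => [|k _]; last first.
  exact: Re_conjM_ge0.
by move=> /allP/(_ i (mem_index_enum i))/eqP/Re_conjM_eq0.
Qed.

Lemma rinnerBl A B K : rinner (A - B) K = rinner A K - rinner B K.
Proof. by rewrite /rinner mxHB mulmxBl linearB ReB. Qed.

Lemma rinnerZr A (t : R) : rinner A (t%:C%C *: A) = t * nrm2 A.
Proof. by rewrite /nrm2 /rinner -scalemxAr mxtraceZ Re_realM. Qed.

Lemma nrm2Z A (t : R) : nrm2 (t%:C%C *: A) = t ^+ 2 * nrm2 A.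
Proof.
rewrite /nrm2 /rinner mxHZ conjc_real -scalemxAr -scalemxAl !mxtraceZ.
by rewrite mulrA -rmorphM Re_realM.
Qed.

Lemma rinner_mulmxr q (A : 'M[C]_(m, q)) (B : 'M[C]_(p, q)) K :
  rinner A (K *m B) = rinner (A *m mxH B) K.
Proof. by rewrite /rinner mxH_mul mxHK mulmxA mxtrace_mulC mulmxA. Qed.

End FrobeniusInnerProduct.

Section EuclideanGradient.
Variable R : realType.
Local Notation C := (R[i]).

(* The complement Q = 1 - S S^H is an orthogonal projection, and
   ||K||^2 - ||K S||^2 = ||K Q||^2. *)
Lemma nrm2_mul_stiefel_le m n r (S : 'M[C]_(n, r)) (K : 'M[C]_(m, n)) :
  stiefel S -> nrm2 (K *m S) <= nrm2 K.
Proof.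
move=> hS; set Q : 'M_n := 1%:M - S *m mxH S.
have QH : mxH Q = Q by rewrite mxHB mxH1 mxH_mul mxHK.
have QQ : Q *m Q = Q.
  by rewrite mulmxBl mul1mx mulmxBr mulmx1 !mulmxA -(mulmxA S) hS mulmx1 subrr subr0.
have nrmQ : nrm2 (K *m Q) = nrm2 K - nrm2 (K *m S).
  rewrite {1}/nrm2 rinner_mulmxr QH -mulmxA QQ mulmxBr mulmx1 rinnerBl.
  by rewrite /nrm2 rinner_mulmxr mulmxA.
by rewrite -subr_ge0 -nrmQ nrm2_ge0.
Qed.

Lemma egrad_uniq m p (F : 'M[C]_(m, p) -> R) X G1 G2 :
  is_egrad F X G1 -> is_egrad F X G2 -> G1 = G2.
Proof.
move=> dG1 dG2; apply/eqP; rewrite -subr_eq0; apply/eqP.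
set D := G1 - G2; set N := nrm2 D.
have [/nrm2_eq0 // | N_neq0] := eqVneq N 0.
have N_gt0 : 0 < N by rewrite lt_neqAle eq_sym N_neq0 nrm2_ge0.
have eps_gt0 : 0 < N / 8%:R by rewrite divr_gt0 // ltr0n.
have [d1 d1_gt0 est1] := dG1 _ eps_gt0; have [d2 d2_gt0 est2] := dG2 _ eps_gt0.
set d := Num.min d1 d2.
have d_gt0 : 0 < d by rewrite lt_min d1_gt0 d2_gt0.
have d_le1 : d <= d1 by rewrite ge_min lexx.
have d_le2 : d <= d2 by rewrite ge_min lexx orbT.
(* any t > 0 with t^2 N < d will do *)
set t := d / (d + 2 * N + 2).
have den_gt0 : 0 < d + 2 * N + 2 by lra.
have tE : t * (d + 2 * N + 2) = d by rewrite /t mulfVK // gt_eqF.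
have t_gt0 : 0 < t by rewrite /t divr_gt0.
have small : nrm2 (t%:C%C *: D) < d by rewrite nrm2Z; nra.
have := est1 _ (lt_le_trans small d_le1).
have := est2 _ (lt_le_trans small d_le2).
rewrite nrm2Z -/N; set a := F _ - F X; set b := rinner G2 _.
have -> : rinner G1 (t%:C%C *: D) = b + t * N.
  by rewrite -rinnerZr rinnerBl addrC subrK.
(* both estimates bound (t N)^2 by 4 (N / 8) t^2 N = (t N)^2 / 2 *)
move=> e2 e1; exfalso.
have tN_gt0 : 0 < t * N by rewrite mulr_gt0.
have : (t * N) ^+ 2 <= 2 * ((a - (b + t * N)) ^+ 2 + (a - b) ^+ 2).
  by have := sqr_ge0 (2 * a - 2 * b - t * N); nra.
nra.
Qed.

Lemma egradE m p (F : 'M[C]_(m, p) -> R) X G : is_egrad F X G -> egrad F X = G.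
Proof.
move=> dG; rewrite /egrad; case: pselect => [h|[]]; last by exists G.
by case: (cid h) => G' dG' /=; exact: egrad_uniq dG' dG.
Qed.

Lemma is_egrad_mulmxr m n r (F : 'M[C]_(m, r) -> R) (S : 'M[C]_(n, r)) X G :
  stiefel S -> is_egrad F (X *m S) G ->
  is_egrad (fun Z => F (Z *m S)) X (G *m mxH S).
Proof.
move=> hS dG eps eps_gt0; have [d d_gt0 est] := dG eps eps_gt0.
exists d => // K small; rewrite mulmxDl -rinner_mulmxr.
have KS_le := nrm2_mul_stiefel_le K hS.
apply: le_trans (est _ (le_lt_trans KS_le small)) _.
by rewrite ler_wpM2l // ltW.
Qed.

End EuclideanGradient.

Section CriticalPoints.
Variable R : realType.
Local Notation C := (R[i]).

Lemma rgrad_unitary_eq0 n (F : 'M[C]_n -> R) U : stiefel U ->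
  rgrad_unitary F U = 0 <-> mxH (mxH U *m egrad F U) = mxH U *m egrad F U.
Proof. by move=> hU; rewrite /rgrad_unitary stiefel_mulKmx // skewH_eq0. Qed.

Lemma rgrad_stiefel_eq0 m p (F : 'M[C]_(m, p) -> R) X : stiefel X ->
  rgrad_stiefel F X = 0 <->
  (1%:M - X *m mxH X) *m egrad F X = 0 /\
  mxH (mxH X *m egrad F X) = mxH X *m egrad F X.
Proof.
rewrite /rgrad_stiefel -skewH_eq0 => hX; set G := egrad F X.
split=> [gradX0|[-> ->]]; last by rewrite mulmx0 addr0.
have XH_normal0 : mxH X *m (1%:M - X *m mxH X) = 0.
  by rewrite mulmxBr mulmx1 mulmxA hX mul1mx subrr.
have tangent0 : skewH (mxH X *m G) = 0.
  move: (congr1 (mulmx (mxH X)) gradX0).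
  by rewrite mulmxDr mulmx0 !mulmxA XH_normal0 mul0mx add0r hX mul1mx.
by move: gradX0; rewrite tangent0 mulmx0 addr0.
Qed.

Lemma hermitian_mulmxH_stiefel m p (S : 'M[C]_(m, p)) (A : 'M[C]_(m, p)) :
  stiefel S ->
  mxH (A *m mxH S) = A *m mxH S <->
  A = S *m (mxH S *m A) /\ mxH (mxH S *m A) = mxH S *m A.
Proof.
rewrite mxH_mul mxHK => hS; split=> [herm|[AE herm]].
  have AE : A = S *m (mxH A *m S).
    by rewrite mulmxA herm -mulmxA hS mulmx1.
  have SA_herm : mxH S *m A = mxH A *m S by rewrite {1}AE mulmxA hS mul1mx.
  by rewrite mxH_mul mxHK SA_herm -AE.
by rewrite AE mxH_mul herm mulmxA.
Qed.

Lemma unitary_normal_eq0 n p (U B : 'M[C]_n) (G : 'M[C]_(n, p)) :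
  stiefel U -> U *m mxH U = 1%:M ->
  (1%:M - U *m B *m mxH U) *m G = 0 <-> mxH U *m G = B *m (mxH U *m G).
Proof.
move=> hU hUH.
have -> : (1%:M - U *m B *m mxH U) *m G = U *m (mxH U *m G - B *m (mxH U *m G)).
  by rewrite mulmxBr !mulmxA hUH mulmxBl !mul1mx.
rewrite stiefel_mulKmx //.
by split=> [/subr0_eq | eqMN] //; rewrite -eqMN subrr.
Qed.

End CriticalPoints.

Theorem theorem2p7 (R : realType) (n r : nat) (hr1 : (1 <= r)%N)
  (hrn : (r <= n)%N) (g : 'M[R[i]]_(n, r) -> R)
  (hg : exists O : 'M[R[i]]_(n, r) -> Prop,
          [/\ mx_open O,
              (forall X, stiefel X -> O X) &
              (forall X, O X -> differentiable_at g X)])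
  (Ustar : 'M[R[i]]_n) (hU : stiefel Ustar) :
  let gt := fun Z : 'M[R[i]]_n => g (sigma hrn Z) in
  let Xstar := sigma hrn Ustar in
  rgrad_unitary gt Ustar = 0 <-> rgrad_stiefel g Xstar = 0.
Proof.
move=> gt Xs; set S : 'M[R[i]]_(n, r) := pid_mx r.
have hS : stiefel S := pid_mx_stiefel R hrn.
have XsE : Xs = Ustar *m S by rewrite /Xs sigma_pid.
have stX : stiefel Xs by rewrite XsE; exact: stiefel_mul.
have gtE : gt = fun Z => g (Z *m S) by apply: funext => Z; rewrite /gt sigma_pid.
have [O [_ stiefel_O diff_O]] := hg.
have [G dG] := diff_O _ (stiefel_O _ stX).
have egX : egrad g Xs = G by exact: egradE.
have egU : egrad gt Ustar = G *m mxH S.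
  by rewrite gtE; apply/egradE/is_egrad_mulmxr; rewrite -?XsE.
have hUH : Ustar *m mxH Ustar = 1%:M by exact: mulmx1C.
rewrite rgrad_unitary_eq0 // rgrad_stiefel_eq0 // egU egX XsE.
rewrite mulmxA hermitian_mulmxH_stiefel // (mxH_mul Ustar).
rewrite (mulmxA (Ustar *m S)) -(mulmxA Ustar S) unitary_normal_eq0 //.
by rewrite -!mulmxA.
Qed.
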